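(* For every $n\ge 4$, the number of strongly magic quad squares that can be made using the cards of the EvenQuads-$2^n$ deck is $2^n(2^n-1)(2^n-2)(2^n-4)(2^n-8)$.
   Context: The EvenQuads-$2^n$ deck consists of $2^n$ cards identified with the integers $0,1,\dots,2^n-1$ (equivalently with $\mathbb{Z}_2^n$ via binary expansion). Four cards $a,b,c,d$ form a quad if and only if $a\oplus b\oplus c\oplus d=0$, where $\oplus$ is bitwise XOR. A quad square is a $4\times4$ array of $16$ pairwise distinct cards. Index rows and columns by $0,1,2,3$; a quad square is strongly magic if for any four distinct positions $(i_1,j_1),\dots,(i_4,j_4)$ with $i_1\oplus i_2\oplus i_3\oplus i_4=0$ and $j_1\oplus j_2\oplus j_3\oplus j_4=0$, the four cards in these positions form a quad. *)

From Stdlib Require Import PeanoNat.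
From mathcomp Require Import all_boot.
Set Implicit Arguments. Unset Strict Implicit. Unset Printing Implicit Defensive.

Definition xorn (a b : nat) : nat := Nat.lxor a b.

Definition card (n : nat) := 'I_(2 ^ n).

Definition is_quad (a b c d : nat) : bool :=
  xorn (xorn (xorn a b) c) d == 0.

Definition array4 (n : nat) := {ffun 'I_4 * 'I_4 -> card n}.

Definition quad_square (n : nat) (A : array4 n) : bool := injectiveb A.

Definition strongly_magic (n : nat) (A : array4 n) : bool :=
  [forall p1 : 'I_4 * 'I_4, forall p2 : 'I_4 * 'I_4,
   forall p3 : 'I_4 * 'I_4, forall p4 : 'I_4 * 'I_4,
     (uniq [:: p1; p2; p3; p4]
      && is_quad p1.1 p2.1 p3.1 p4.1
      && is_quad p1.2 p2.2 p3.2 p4.2)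
     ==> is_quad (A p1) (A p2) (A p3) (A p4)].

From Pilot Require Import Defs.
From mathcomp Require Import all_boot.
From Stdlib Require PeanoNat.
Set Implicit Arguments. Unset Strict Implicit. Unset Printing Implicit Defensive.

(** Read a position (i, j) as the vector of 𝔽₂⁴ formed by the bits of i and j,
    and a card as a vector of 𝔽₂ⁿ.  The quad conditions on positions are then
    the affine relations p1 + p2 + p3 + p4 = 0, so a strongly magic square is
    an affine map 𝔽₂⁴ → 𝔽₂ⁿ: it is determined by its corner card a and the four
    directions A(0,1) + a, A(0,2) + a, A(1,0) + a, A(2,0) + a, and conversely
    every such choice is strongly magic.  The sixteen cards are distinct iff the
    directions are linearly independent, and choosing each direction outside the
    span of the previous ones gives 2ⁿ (2ⁿ - 1)(2ⁿ - 2)(2ⁿ - 4)(2ⁿ - 8) squares. *)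

Module N := PeanoNat.Nat.

Arguments xorn : simpl never.

Ltac xorn_identity :=
  rewrite /xorn; apply: N.bits_inj; let i := fresh "i" in move=> i;
  rewrite ?N.lxor_spec ?N.bits_0;
  repeat match goal with |- context [Nat.testbit ?x i] => case: (Nat.testbit x i) end.

Lemma xornK a : involutive (xorn a).
Proof. by move=> z; xorn_identity. Qed.

Lemma xorn_inj a : injective (xorn a).
Proof. exact: inv_inj (xornK a). Qed.

(* Proved apart: [xorn_identity] would also rewrite inside atoms that unfold
   to [Nat.lxor] terms. *)
Lemma xorn_shift4 a c1 c2 c3 c4 :
  xorn (xorn (xorn (xorn a c1) (xorn a c2)) (xorn a c3)) (xorn a c4) =
  xorn (xorn (xorn c1 c2) c3) c4.
Proof. by xorn_identity. Qed.

Lemma pow2E n : Nat.pow 2 n = 2 ^ n.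
Proof. by elim: n => // n IHn; rewrite expnS -IHn. Qed.

Lemma testbit_high a n m : a < 2 ^ n -> n <= m -> Nat.testbit a m = false.
Proof.
move=> a_lt n_le_m; have [->|a_gt0] := posnP a; first exact: N.bits_0.
apply: N.bits_above_log2; apply/ltP; apply: leq_trans n_le_m; apply/ltP.
by apply/N.log2_lt_pow2; [apply/ltP | rewrite pow2E; apply/ltP].
Qed.

Lemma ltn_pow2_bits a n : (forall m, n <= m -> Nat.testbit a m = false) -> a < 2 ^ n.
Proof.
move=> high; have [->|a_gt0] := posnP a; first by rewrite expn_gt0.
rewrite -pow2E; apply/ltP/N.log2_lt_pow2; first exact/ltP.
case: (leqP n (N.log2 a)) => [/high|/ltP //].
by rewrite N.bit_log2 // => a0; rewrite a0 in a_gt0.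
Qed.

Lemma xorn_lt n a b : a < 2 ^ n -> b < 2 ^ n -> xorn a b < 2 ^ n.
Proof.
move=> a_lt b_lt; apply: ltn_pow2_bits => m n_le_m.
by rewrite /xorn N.lxor_spec (testbit_high a_lt n_le_m) (testbit_high b_lt n_le_m).
Qed.

Definition card_xor n (u v : Defs.card n) : Defs.card n :=
  Ordinal (xorn_lt (ltn_ord u) (ltn_ord v)).

Definition bounded n (s : seq nat) : bool := all (fun x => x < 2 ^ n) s.

Lemma bounded_val n (s : seq (Defs.card n)) : bounded n (map val s).
Proof. by rewrite /bounded all_map; apply/allP => u _; apply: ltn_ord. Qed.

Fixpoint bitseqs k : seq bitseq :=
  if k is k'.+1 then map (cons false) (bitseqs k') ++ map (cons true) (bitseqs k')
  else [:: [::]].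

Lemma size_bitseqs k : size (bitseqs k) = 2 ^ k.
Proof. by elim: k => // k IHk; rewrite size_cat !size_map IHk expnS mul2n addnn. Qed.

Fixpoint xor_comb (s : seq nat) (bs : bitseq) : nat :=
  match s, bs with
  | w :: s', b :: bs' => xorn (if b then w else 0) (xor_comb s' bs')
  | _, _ => 0
  end.

Definition bxor (bs cs : bitseq) : bitseq := [seq xorb x.1 x.2 | x <- zip bs cs].

Lemma xor_comb_bxor s bs cs : size bs = size cs ->
  xor_comb s (bxor bs cs) = xorn (xor_comb s bs) (xor_comb s cs).
Proof.
elim: s bs cs => [|w s IHs] [|b bs] [|c cs] //= eq_size; try by xorn_identity.
rewrite IHs; last by case: eq_size.
by case: b; case: c; xorn_identity.
Qed.

Lemma xor_comb_nseq_false s k : xor_comb s (nseq k false) = 0.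
Proof. by elim: s k => [|w s IHs] [|k] //=; rewrite IHs. Qed.

Lemma xor_comb_lt n s bs : bounded n s -> xor_comb s bs < 2 ^ n.
Proof.
elim: s bs => [|w s IHs] [|b bs] /=; rewrite ?expn_gt0 // => /andP [w_lt s_lt].
by apply: xorn_lt; [case: b; rewrite ?expn_gt0 | apply: IHs].
Qed.

(* All 2 ^ size s combinations of s, with multiplicity: s is linearly
   independent exactly when this list is duplicate-free. *)
Fixpoint xor_span (s : seq nat) : seq nat :=
  if s is w :: s' then xor_span s' ++ map (xorn w) (xor_span s') else [:: 0].

Definition xor_independent (s : seq nat) : bool := uniq (xor_span s).

Lemma xor_spanE s : xor_span s = map (xor_comb s) (bitseqs (size s)).
Proof.
elim: s => [|w s IHs] //=; rewrite IHs map_cat -!map_comp.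
by congr (_ ++ _); apply: eq_map => bs /=; xorn_identity.
Qed.

Lemma size_xor_span s : size (xor_span s) = 2 ^ size s.
Proof. by rewrite xor_spanE size_map size_bitseqs. Qed.

Lemma bounded_xor_span n s : bounded n s -> bounded n (xor_span s).
Proof.
by move=> s_lt; rewrite xor_spanE; apply/allP => _ /mapP [bs _ ->]; apply: xor_comb_lt.
Qed.

Lemma mem0_xor_span s : 0 \in xor_span s.
Proof. by elim: s => [|w s IHs] //=; rewrite mem_cat IHs. Qed.

Lemma xor_span_xorn s x y :
  x \in xor_span s -> y \in xor_span s -> xorn x y \in xor_span s.
Proof.
elim: s x y => [|w s IHs] x y /=; first by rewrite !inE => /eqP -> /eqP ->.
rewrite !mem_cat => /orP [x_in|/mapP [x' x'_in ->]] /orP [y_in|/mapP [y' y'_in ->]].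
- by rewrite IHs.
- apply/orP; right; apply/mapP; exists (xorn x y'); first exact: IHs.
  by xorn_identity.
- apply/orP; right; apply/mapP; exists (xorn x' y); first exact: IHs.
  by xorn_identity.
- have -> : xorn (xorn w x') (xorn w y') = xorn x' y' by xorn_identity.
  by rewrite IHs.
Qed.

Lemma xor_independent_cons w s :
  xor_independent (w :: s) = xor_independent s && (w \notin xor_span s).
Proof.
rewrite /xor_independent /= cat_uniq (map_inj_uniq (@xorn_inj w)).
have -> : has (mem (xor_span s)) (map (xorn w) (xor_span s)) = (w \in xor_span s).
  apply/hasP/idP => [[_ /mapP [y y_in ->] wy_in]|w_in].
    by rewrite -(xornK y w) xor_span_xorn // [xorn y w]/xorn N.lxor_comm.
  exists w => //; apply/mapP; exists 0; first exact: mem0_xor_span.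
  by xorn_identity.
by case: (uniq _); rewrite ?andbT.
Qed.

Lemma sum_notin n (l : seq nat) : uniq l -> bounded n l ->
  \sum_(u : Defs.card n) (val u \notin l) = 2 ^ n - size l.
Proof.
move=> l_uniq l_lt.
have card_in : #|[pred u : Defs.card n | val u \in l]| = size l.
  rewrite cardE -(size_map val); apply/perm_size/uniq_perm => //.
    by rewrite (map_inj_uniq val_inj) enum_uniq.
  move=> x; apply/mapP/idP => [[u]|x_in]; first by rewrite mem_enum inE => ? ->.
  by exists (Ordinal (allP l_lt x x_in)); rewrite ?mem_enum.
have := cardC [pred u : Defs.card n | val u \in l].
rewrite card_in card_ord => card_total.
rewrite -[in RHS]card_total addKn -sum1_card [RHS]big_mkcond /=.
by apply: eq_bigr => u _; rewrite !inE; case: (_ \in l).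
Qed.

Lemma sum_xor_independent_cons n (T : finType) (f : T -> seq (Defs.card n)) k :
  (forall t, size (f t) = k) ->
  \sum_(x : T * Defs.card n) xor_independent (map val (x.2 :: f x.1)) =
  (\sum_(t : T) xor_independent (map val (f t))) * (2 ^ n - 2 ^ k).
Proof.
move=> size_f.
rewrite -(pair_bigA _ (fun t u => xor_independent (map val (u :: f t)) : nat)).
rewrite big_distrl; apply: eq_bigr => t _ /=.
under eq_bigr => u _ do rewrite xor_independent_cons.
have [indep|_] /= := boolP (xor_independent _); last by rewrite mul0n big1.
rewrite mul1n -(size_f t) -(size_map val) -size_xor_span sum_notin //.
exact/bounded_xor_span/bounded_val.
Qed.

Definition o0 : 'I_4 := @Ordinal 4 0 isT.
Definition o1 : 'I_4 := @Ordinal 4 1 isT.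
Definition o2 : 'I_4 := @Ordinal 4 2 isT.
Definition o3 : 'I_4 := @Ordinal 4 3 isT.

Lemma ord4P (P : 'I_4 -> Prop) : P o0 -> P o1 -> P o2 -> P o3 -> forall i, P i.
Proof.
move=> P0 P1 P2 P3 [[|[|[|[|k]]]] lt_k4] //.
- by rewrite (_ : Ordinal lt_k4 = o0) //; apply: val_inj.
- by rewrite (_ : Ordinal lt_k4 = o1) //; apply: val_inj.
- by rewrite (_ : Ordinal lt_k4 = o2) //; apply: val_inj.
- by rewrite (_ : Ordinal lt_k4 = o3) //; apply: val_inj.
Qed.

Definition positions : seq ('I_4 * 'I_4) :=
  [seq (i, j) | i <- [:: o0; o1; o2; o3], j <- [:: o0; o1; o2; o3]].

Lemma perm_enum_positions : perm_eq (enum {: 'I_4 * 'I_4}) positions.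
Proof.
apply: uniq_perm; rewrite ?enum_uniq // => -[i j].
by rewrite mem_enum; elim/ord4P: i; elim/ord4P: j.
Qed.

Definition position_bits (p : 'I_4 * 'I_4) : bitseq :=
  [:: Nat.testbit p.1 1; Nat.testbit p.1 0; Nat.testbit p.2 1; Nat.testbit p.2 0].

Lemma perm_bitseqs_positions : perm_eq (bitseqs 4) (map position_bits positions).
Proof. by vm_compute. Qed.

Section PositionBitsQuad.
Local Arguments Nat.testbit : simpl never.

Lemma position_bits_quad (p1 p2 p3 p4 : 'I_4 * 'I_4) :
  is_quad p1.1 p2.1 p3.1 p4.1 -> is_quad p1.2 p2.2 p3.2 p4.2 ->
  bxor (bxor (bxor (position_bits p1) (position_bits p2)) (position_bits p3))
       (position_bits p4) = nseq 4 false.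
Proof.
rewrite /is_quad /xorn => /eqP quad1 /eqP quad2.
by rewrite /bxor /= -!N.lxor_spec quad1 quad2 !N.bits_0.
Qed.

End PositionBitsQuad.

(* ((((a, d01), d02), d10), d20): the corner card a = A(0,0) and the directions
   dij = A(i,j) xor a; [directions] lists them from d20 down to d01, in the
   order of the bits in [position_bits]. *)
Definition frame n :=
  (Defs.card n * Defs.card n * Defs.card n * Defs.card n * Defs.card n)%type.

Definition origin n (x : frame n) : nat := x.1.1.1.1.

Definition directions n (x : frame n) : seq nat :=
  map val [:: x.2; x.1.2; x.1.1.2; x.1.1.1.2].

Lemma affine_value_lt n (x : frame n) p :
  xorn (origin x) (xor_comb (directions x) (position_bits p)) < 2 ^ n.
Proof. by apply: xorn_lt; [apply: ltn_ord | apply/xor_comb_lt/bounded_val]. Qed.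

Definition affine_array n (x : frame n) : array4 n :=
  [ffun p => Ordinal (affine_value_lt x p)].

Definition frame_of_array n (A : array4 n) : frame n :=
  let a := A (o0, o0) in
  (a, card_xor (A (o0, o1)) a, card_xor (A (o0, o2)) a,
   card_xor (A (o1, o0)) a, card_xor (A (o2, o0)) a).

Lemma affine_arrayE n (x : frame n) p :
  affine_array x p = xorn (origin x) (xor_comb (directions x) (position_bits p)) :> nat.
Proof. by rewrite ffunE. Qed.

Lemma quad_square_affine n (x : frame n) :
  quad_square (affine_array x) = xor_independent (directions x).
Proof.
rewrite /quad_square /injectiveb /dinjectiveb.
rewrite (perm_uniq (perm_map _ perm_enum_positions)).
rewrite /xor_independent xor_spanE (perm_uniq (perm_map _ perm_bitseqs_positions)).
rewrite -(map_inj_uniq val_inj) -!map_comp.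
have -> : map (val \o affine_array x) positions =
          map (xorn (origin x)) (map (xor_comb (directions x) \o position_bits) positions).
  by rewrite -map_comp; apply: eq_map => p; apply: affine_arrayE.
by rewrite (map_inj_uniq (@xorn_inj _)).
Qed.

Lemma strongly_magic_affine n (x : frame n) : strongly_magic (affine_array x).
Proof.
apply/forallP => p1; apply/forallP => p2; apply/forallP => p3; apply/forallP => p4.
apply/implyP => /andP [/andP [_ quad1] quad2].
rewrite /is_quad !affine_arrayE xorn_shift4 -!xor_comb_bxor //.
by rewrite position_bits_quad // xor_comb_nseq_false.
Qed.

Lemma strongly_magicP n (A : array4 n) : strongly_magic A ->
  forall p1 p2 p3 p4 : 'I_4 * 'I_4,
  uniq [:: p1; p2; p3; p4] ->
  is_quad p1.1 p2.1 p3.1 p4.1 -> is_quad p1.2 p2.2 p3.2 p4.2 ->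
  is_quad (A p1) (A p2) (A p3) (A p4).
Proof.
move=> /forallP magic p1 p2 p3 p4 uniq_p quad1 quad2.
move: (magic p1) => /forallP/(_ p2)/forallP/(_ p3)/forallP/(_ p4)/implyP; apply.
by rewrite uniq_p quad1 quad2.
Qed.

Arguments strongly_magicP {n A} magic p1 p2 p3 p4.

Lemma is_quadE a b c d : is_quad a b c d -> d = xorn (xorn a b) c.
Proof.
by move=> /eqP quad; apply: (@xorn_inj (xorn (xorn a b) c)); rewrite quad; xorn_identity.
Qed.

Section StronglyMagic.
Variables (n : nat) (A : array4 n).
Hypothesis magic : strongly_magic A.

Lemma strongly_magic_row3 :
  A (o0, o3) = xorn (xorn (A (o0, o0)) (A (o0, o1))) (A (o0, o2)) :> nat.
Proof.
exact: is_quadE (strongly_magicP magic (o0, o0) (o0, o1) (o0, o2) (o0, o3) isT isT isT).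
Qed.

Lemma strongly_magic_col3 :
  A (o3, o0) = xorn (xorn (A (o0, o0)) (A (o1, o0))) (A (o2, o0)) :> nat.
Proof.
exact: is_quadE (strongly_magicP magic (o0, o0) (o1, o0) (o2, o0) (o3, o0) isT isT isT).
Qed.

Lemma strongly_magic_cross i j :
  A (i, j) = xorn (xorn (A (o0, o0)) (A (i, o0))) (A (o0, j)) :> nat.
Proof.
have [-> | i_neq0] := eqVneq i o0; first by xorn_identity.
have [-> | j_neq0] := eqVneq j o0; first by xorn_identity.
apply: is_quadE (strongly_magicP magic (o0, o0) (i, o0) (o0, j) (i, j) _ _ _).
- rewrite /= !inE !xpair_eqE !eqxx /= ![o0 == _]eq_sym.
  by rewrite (negbTE i_neq0) (negbTE j_neq0).
- by rewrite /is_quad /=; apply/eqP; xorn_identity.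
- by rewrite /is_quad /=; apply/eqP; xorn_identity.
Qed.

Lemma strongly_magic_affine_frame p :
  A p = xorn (origin (frame_of_array A))
             (xor_comb (directions (frame_of_array A)) (position_bits p)) :> nat.
Proof.
case: p => i j; rewrite strongly_magic_cross.
by elim/ord4P: i; elim/ord4P: j; rewrite /= ?strongly_magic_row3 ?strongly_magic_col3;
  xorn_identity.
Qed.

Lemma frame_of_arrayK : affine_array (frame_of_array A) = A.
Proof.
by apply/ffunP => p; apply: ord_inj; rewrite affine_arrayE strongly_magic_affine_frame.
Qed.

End StronglyMagic.

Lemma affine_arrayK n : cancel (@affine_array n) (@frame_of_array n).
Proof.
move=> [[[[a d01] d02] d10] d20].
by congr (_, _, _, _, _); apply: ord_inj; rewrite /= !affine_arrayE; xorn_identity.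
Qed.

Lemma magic_quad_squaresE n :
  [set A : array4 n | quad_square A && strongly_magic A] =
  @affine_array n @: [set x | xor_independent (directions x)].
Proof.
apply/setP => A; rewrite inE; apply/andP/imsetP => [[square magic]|[x]].
  exists (frame_of_array A); last by rewrite frame_of_arrayK.
  by rewrite inE -quad_square_affine frame_of_arrayK.
by rewrite inE -quad_square_affine => indep ->; split; last exact: strongly_magic_affine.
Qed.

Lemma sum_xor_independent_directions n :
  \sum_(x : frame n) xor_independent (directions x) =
  2 ^ n * (2 ^ n - 1) * (2 ^ n - 2) * (2 ^ n - 4) * (2 ^ n - 8).
Proof.
rewrite (@sum_xor_independent_cons n _ (fun t => [:: t.2; t.1.2; t.1.1.2]) 3) //.
rewrite (@sum_xor_independent_cons n _ (fun t => [:: t.2; t.1.2]) 2) //.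
rewrite (@sum_xor_independent_cons n _ (fun t => [:: t.2]) 1) //.
rewrite (@sum_xor_independent_cons n _ (fun=> [::]) 0) //.
by rewrite sum1_card card_ord.
Qed.

Theorem mainTheorem3 (n : nat) : 4 <= n ->
  #|[set A : array4 n | quad_square A && strongly_magic A]| =
  2 ^ n * (2 ^ n - 1) * (2 ^ n - 2) * (2 ^ n - 4) * (2 ^ n - 8).
Proof.
move=> _; rewrite magic_quad_squaresE card_imset; last exact: can_inj (@affine_arrayK n).
rewrite -sum_xor_independent_directions -sum1dep_card big_mkcond /=.
by apply: eq_bigr => x _; case: (xor_independent _).
Qed.
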